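(* Let $G$ be a group and $X \subseteq \mathbb{N}$. Then $G/\mathrm{Tor}^{X}_{\omega}(G) \cong G^{X-\mathrm{tf}}$; that is, $G/\mathrm{Tor}^{X}_{\omega}(G)$ is $X$-torsion-free and the quotient map $h: G \to G/\mathrm{Tor}^{X}_{\omega}(G)$ has the property that for every $X$-torsion-free group $K$ and every homomorphism $f: G \to K$ there is a homomorphism $\phi: G/\mathrm{Tor}^{X}_{\omega}(G) \to K$ with $f = \phi \circ h$.
   Context: For a group $G$ and $X \subseteq \mathbb{N}$, the $X$-torsion of $G$ is $\mathrm{Tor}^{X}(G) := \{ g \in G \mid \exists n \in X \text{ with } g^{n} = e\}$, and $G$ is $X$-torsion-free if $\mathrm{Tor}^{X}(G) = \{e\}$. A surjective homomorphism $h: G \to H$ onto an $X$-torsion-free group $H$ is universal if for every $X$-torsion-free group $K$ and homomorphism $f: G\to K$ there is a homomorphism $\phi: H \to K$ with $f = \phi\circ h$; such $H$ is unique up to isomorphism and denoted $G^{X-\mathrm{tf}}$ (the universal $X$-torsion-free quotient). Define inductively $\mathrm{Tor}^{X}_{0}(G) := \{e\}$, $\mathrm{Tor}^{X}_{n+1}(G) := \langle\langle \{ g \in G \mid g\,\mathrm{Tor}^{X}_{n}(G) \in \mathrm{Tor}^{X}(G/\mathrm{Tor}^{X}_{n}(G))\} \rangle\rangle^{G}$ (normal closure in $G$), and $\mathrm{Tor}^{X}_{\omega}(G) := \bigcup_{n \in \mathbb{N}} \mathrm{Tor}^{X}_{n}(G)$. *)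

From Stdlib Require Import Arith.

Set Implicit Arguments.

Record group := Group {
  carrier :> Type;
  gmul : carrier -> carrier -> carrier;
  gone : carrier;
  ginv : carrier -> carrier;
  gmulA : forall x y z, gmul x (gmul y z) = gmul (gmul x y) z;
  gmul1l : forall x, gmul gone x = x;
  gmul1r : forall x, gmul x gone = x;
  gmulVl : forall x, gmul (ginv x) x = gone;
  gmulVr : forall x, gmul x (ginv x) = gone
}.

Arguments gmul {g}.
Arguments gone {g}.
Arguments ginv {g}.

Fixpoint gpow {G : group} (g : G) (n : nat) : G :=
  match n with
  | 0 => gone
  | S n => gmul g (gpow g n)
  end.

Definition is_hom {G H : group} (f : G -> H) : Prop :=
  forall x y : G, f (gmul x y) = gmul (f x) (f y).

Definition Tor (X : nat -> Prop) (G : group) : G -> Prop :=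
  fun g => exists n, X n /\ gpow g n = gone.

Definition torsion_free (X : nat -> Prop) (G : group) : Prop :=
  forall g : G, Tor X G g -> g = gone.

Definition normal_subgroup {G : group} (N : G -> Prop) : Prop :=
  N gone /\
  (forall x y, N x -> N y -> N (gmul x y)) /\
  (forall x, N x -> N (ginv x)) /\
  (forall x g, N x -> N (gmul (ginv g) (gmul x g))).

Definition normal_closure {G : group} (S : G -> Prop) : G -> Prop :=
  fun g => forall N : G -> Prop, normal_subgroup N -> (forall x, S x -> N x) -> N g.

(** Tor^X_n(G).  The condition  g Tor_n ∈ Tor^X(G/Tor_n)  is written out:
    (g Tor_n)^m is the trivial coset iff g^m ∈ Tor_n. *)
Fixpoint Tor_n (X : nat -> Prop) (G : group) (n : nat) : G -> Prop :=
  match n with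
  | 0 => fun g => g = gone
  | S n => normal_closure (fun g => exists m, X m /\ Tor_n X G n (gpow g m))
  end.

Definition Tor_omega (X : nat -> Prop) (G : group) : G -> Prop :=
  fun g => exists n, Tor_n X G n g.

(* Each Tor_(n+1) contains every g with an X-power g^m in Tor_n, so the
   increasing union Tor_omega is closed under X-roots, which says exactly that
   G / Tor_omega is X-torsion-free.  Conversely, a homomorphism f into an
   X-torsion-free group kills Tor_0; if it kills Tor_n, then f g ^ m = f (g ^ m)
   is trivial for every X-root g of Tor_n, so f kills those roots, hence their
   normal closure Tor_(n+1).  Thus f kills Tor_omega and factors through the
   quotient. *)

From Stdlib Require Import ClassicalEpsilon FunctionalExtensionality PropExtensionality ProofIrrelevance.

Arguments gmulA {g} x y z.
Arguments gmul1l {g} x.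
Arguments gmul1r {g} x.
Arguments gmulVl {g} x.
Arguments gmulVr {g} x.

Declare Scope group_scope.
Local Infix "*" := gmul : group_scope.
Local Notation "x ^-1" := (ginv x) (at level 3, left associativity, format "x ^-1") : group_scope.
Local Notation "1" := gone : group_scope.
Local Open Scope group_scope.

Section GroupTheory.
Context {G : group}.
Implicit Types x y : G.

Lemma ginv_unique x y : x * y = 1 -> x^-1 = y.
Proof.
  intro Exy. rewrite <- (gmul1r x^-1), <- Exy, gmulA, gmulVl, gmul1l.
  reflexivity.
Qed.

Lemma ginv_mul x y : (x * y)^-1 = y^-1 * x^-1.
Proof.
  apply ginv_unique.
  rewrite gmulA, <- (gmulA x y), gmulVr, gmul1r, gmulVr. reflexivity.
Qed.

Lemma ginv_involutive x : x^-1^-1 = x.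
Proof. apply ginv_unique, gmulVl. Qed.

Lemma ginv_one : (1 : G)^-1 = 1.
Proof. apply ginv_unique, gmul1l. Qed.

Lemma gmulKV x y : x * (x^-1 * y) = y.
Proof. rewrite gmulA, gmulVr, gmul1l. reflexivity. Qed.

Lemma gmulVK x y : x^-1 * (x * y) = y.
Proof. rewrite gmulA, gmulVl, gmul1l. reflexivity. Qed.

End GroupTheory.

Section Homomorphisms.
Context {G H : group} {f : G -> H} (f_hom : is_hom f).

Lemma hom_one : f 1 = 1.
Proof.
  assert (Ef : f 1 = f 1 * f 1) by (rewrite <- f_hom, gmul1l; reflexivity).
  rewrite <- (gmulVK (f 1) (f 1)), <- Ef. apply gmulVl.
Qed.

Lemma hom_inv x : f x^-1 = (f x)^-1.
Proof. symmetry. apply ginv_unique. rewrite <- f_hom, gmulVr. apply hom_one. Qed.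

Lemma hom_pow x n : f (gpow x n) = gpow (f x) n.
Proof.
  induction n as [|n IHn]; simpl.
  - apply hom_one.
  - rewrite f_hom, IHn. reflexivity.
Qed.

Lemma hom_kernel_normal : normal_subgroup (fun x => f x = 1).
Proof.
  repeat split.
  - apply hom_one.
  - intros x y Ex Ey. rewrite f_hom, Ex, Ey. apply gmul1l.
  - intros x Ex. rewrite hom_inv, Ex. apply ginv_one.
  - intros x g Ex. rewrite !f_hom, Ex, gmul1l, hom_inv. apply gmulVl.
Qed.

Lemma hom_eq_of_kernel x y : f (x^-1 * y) = 1 -> f x = f y.
Proof.
  rewrite f_hom, hom_inv. intro E.
  rewrite <- (gmulKV (f x) (f y)), E. symmetry. apply gmul1r.
Qed.

End Homomorphisms.

Lemma normal_closure_min {G : group} {S N : G -> Prop} :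
  normal_subgroup N -> (forall x, S x -> N x) -> forall x, normal_closure S x -> N x.
Proof. intros HN SN x Sx. exact (Sx N HN SN). Qed.

Lemma normal_closure_normal {G : group} (S : G -> Prop) : normal_subgroup (normal_closure S).
Proof.
  repeat split; unfold normal_closure.
  - intros N HN _. apply HN.
  - intros x y Sx Sy N HN SN. apply HN; [apply Sx | apply Sy]; assumption.
  - intros x Sx N HN SN. apply HN, Sx; assumption.
  - intros x g Sx N HN SN. apply HN, Sx; assumption.
Qed.

Lemma normal_closure_sub {G : group} (S : G -> Prop) x : S x -> normal_closure S x.
Proof. intros Sx N _ SN. exact (SN x Sx). Qed.

Section Quotient.
Context {G : group} {N : G -> Prop} (HN : normal_subgroup N).

Let N_one : N 1. Proof. apply HN. Qed.
Let N_mul x y : N x -> N y -> N (x * y). Proof. apply HN. Qed.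
Let N_inv x : N x -> N x^-1. Proof. apply HN. Qed.
Let N_conj x g : N x -> N (g^-1 * (x * g)). Proof. apply HN. Qed.

Definition coset (g : G) : G -> Prop := fun x => N (g^-1 * x).

Lemma coset_eq a b : coset a = coset b <-> N (a^-1 * b).
Proof.
  split.
  - intro E. assert (Hb : coset b b) by (unfold coset; rewrite gmulVl; apply N_one).
    rewrite <- E in Hb. exact Hb.
  - intro Nab. apply functional_extensionality; intro x. unfold coset.
    apply propositional_extensionality. split; intro Nx.
    + replace (b^-1 * x) with ((a^-1 * b)^-1 * (a^-1 * x))
        by (rewrite ginv_mul, ginv_involutive, <- gmulA, gmulKV; reflexivity).
      apply N_mul; [apply N_inv |]; assumption.
    + replace (a^-1 * x) with ((a^-1 * b) * (b^-1 * x))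
        by (rewrite <- gmulA, gmulKV; reflexivity).
      apply N_mul; assumption.
Qed.

(* Cosets are predicates on G, so equal cosets are equal by extensionality; the
   proof component of the subset type is handled by proof irrelevance. *)
Definition quotient_carrier := {P : G -> Prop | exists g, P = coset g}.

Definition proj (g : G) : quotient_carrier := exist _ (coset g) (ex_intro _ g eq_refl).

Definition rep (P : quotient_carrier) : G :=
  proj1_sig (constructive_indefinite_description _ (proj2_sig P)).

Lemma proj_rep P : proj (rep P) = P.
Proof.
  unfold rep. destruct (constructive_indefinite_description _ _) as [g Hg].
  destruct P as [P HP]. simpl in *. subst P. apply subset_eq_compat. reflexivity.
Qed.

Lemma proj_eq a b : proj a = proj b <-> N (a^-1 * b).
Proof.
  rewrite <- coset_eq. split; intro E.
  - exact (f_equal (@proj1_sig _ _) E).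
  - apply subset_eq_compat. exact E.
Qed.

Lemma proj_surj P : exists a, proj a = P.
Proof. exists (rep P). apply proj_rep. Qed.

Lemma rep_proj a : N (a^-1 * rep (proj a)).
Proof. apply proj_eq. symmetry. apply proj_rep. Qed.

Lemma proj_mul_compat a b a' b' :
  N (a^-1 * a') -> N (b^-1 * b') -> proj (a * b) = proj (a' * b').
Proof.
  intros Na Nb. apply proj_eq.
  replace ((a * b)^-1 * (a' * b')) with ((b^-1 * ((a^-1 * a') * b)) * (b^-1 * b')).
  - apply N_mul; [apply N_conj |]; assumption.
  - rewrite ginv_mul, <- !gmulA, gmulKV. reflexivity.
Qed.

Definition qmul (P Q : quotient_carrier) : quotient_carrier := proj (rep P * rep Q).
Definition qone : quotient_carrier := proj 1.
Definition qinv (P : quotient_carrier) : quotient_carrier := proj (rep P)^-1.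

Lemma qmul_proj a b : qmul (proj a) (proj b) = proj (a * b).
Proof. symmetry. apply proj_mul_compat; apply rep_proj. Qed.

Lemma qinv_proj a : qinv (proj a) = proj a^-1.
Proof.
  unfold qinv. apply proj_eq. rewrite ginv_involutive.
  replace (rep (proj a) * a^-1)
    with ((rep (proj a))^-1^-1 * ((a^-1 * rep (proj a)) * (rep (proj a))^-1))
    by (rewrite ginv_involutive, <- gmulA, gmulVr, gmul1r; reflexivity).
  apply N_conj, rep_proj.
Qed.

Lemma qmulA P Q R : qmul P (qmul Q R) = qmul (qmul P Q) R.
Proof.
  destruct (proj_surj P) as [a <-], (proj_surj Q) as [b <-], (proj_surj R) as [c <-].
  rewrite !qmul_proj, gmulA. reflexivity.
Qed.

Lemma qmul1l P : qmul qone P = P.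
Proof. destruct (proj_surj P) as [a <-]. unfold qone. rewrite qmul_proj, gmul1l. reflexivity. Qed.

Lemma qmul1r P : qmul P qone = P.
Proof. destruct (proj_surj P) as [a <-]. unfold qone. rewrite qmul_proj, gmul1r. reflexivity. Qed.

Lemma qmulVl P : qmul (qinv P) P = qone.
Proof. destruct (proj_surj P) as [a <-]. rewrite qinv_proj, qmul_proj, gmulVl. reflexivity. Qed.

Lemma qmulVr P : qmul P (qinv P) = qone.
Proof. destruct (proj_surj P) as [a <-]. rewrite qinv_proj, qmul_proj, gmulVr. reflexivity. Qed.

Definition quotient : group := @Group quotient_carrier qmul qone qinv qmulA qmul1l qmul1r qmulVl qmulVr.

Lemma proj_hom : @is_hom G quotient proj.
Proof. intros x y. symmetry. apply qmul_proj. Qed.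

Lemma proj_kernel a : (proj a : quotient) = 1 <-> N a.
Proof.
  change (proj a = proj 1 <-> N a). rewrite proj_eq, gmul1r. split; intro Na.
  - rewrite <- (ginv_involutive a). apply N_inv. exact Na.
  - apply N_inv. exact Na.
Qed.

Lemma quotient_torsion_free (X : nat -> Prop) :
  (forall g m, X m -> N (gpow g m) -> N g) -> torsion_free X quotient.
Proof.
  intros N_root P [m [Xm Pm]]. destruct (proj_surj P) as [a <-].
  rewrite <- (hom_pow proj_hom), proj_kernel in Pm.
  apply proj_kernel, (N_root a m); assumption.
Qed.

Lemma quotient_lift (K : group) (f : G -> K) :
  is_hom f -> (forall g, N g -> f g = 1) ->
  exists phi : quotient -> K, is_hom phi /\ forall g, f g = phi (proj g).
Proof.
  intros f_hom f_N.
  assert (f_rep : forall a, f a = f (rep (proj a)))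
    by (intro a; apply (hom_eq_of_kernel f_hom), f_N, rep_proj).
  exists (fun P => f (rep P)). split.
  - intros P Q. simpl. unfold qmul. rewrite <- f_hom. symmetry. apply f_rep.
  - exact f_rep.
Qed.

End Quotient.

Arguments proj {G} N g.

Section IteratedTorsion.
Variables (G : group) (X : nat -> Prop).

Lemma Tor_n_normal n : normal_subgroup (Tor_n X G n).
Proof.
  destruct n as [|n]; simpl.
  - repeat split.
    + intros x y -> ->. apply gmul1l.
    + intros x ->. apply ginv_one.
    + intros x g ->. rewrite gmul1l. apply gmulVl.
  - apply normal_closure_normal.
Qed.

Lemma Tor_n_root n g m : X m -> Tor_n X G n (gpow g m) -> Tor_n X G (S n) g.
Proof. intros Xm Hgm. apply normal_closure_sub. exists m. split; assumption. Qed.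

Lemma Tor_n_succ n g : Tor_n X G n g -> Tor_n X G (S n) g.
Proof.
  revert g. induction n as [|n IHn]; intros g Hg.
  - simpl in Hg. subst g. apply (Tor_n_normal 1).
  - refine (normal_closure_min (Tor_n_normal (S (S n))) _ g Hg).
    intros x [m [Xm Hx]]. apply (Tor_n_root _ _ m Xm), IHn, Hx.
Qed.

Lemma Tor_n_monotone n k g : n <= k -> Tor_n X G n g -> Tor_n X G k g.
Proof. intros Hnk Hg. induction Hnk; [exact Hg | apply Tor_n_succ; assumption]. Qed.

Lemma Tor_omega_normal : normal_subgroup (Tor_omega X G).
Proof.
  unfold Tor_omega. repeat split.
  - exists 0. reflexivity.
  - intros x y [n Hx] [k Hy]. exists (Nat.max n k). apply (Tor_n_normal (Nat.max n k)).
    + apply (Tor_n_monotone n); [apply PeanoNat.Nat.le_max_l | exact Hx].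
    + apply (Tor_n_monotone k); [apply PeanoNat.Nat.le_max_r | exact Hy].
  - intros x [n Hx]. exists n. apply (Tor_n_normal n), Hx.
  - intros x g [n Hx]. exists n. apply (Tor_n_normal n), Hx.
Qed.

Lemma Tor_omega_root g m : X m -> Tor_omega X G (gpow g m) -> Tor_omega X G g.
Proof. intros Xm [n Hn]. exists (S n). apply (Tor_n_root n g m Xm Hn). Qed.

Lemma hom_Tor_omega_trivial (K : group) (f : G -> K) :
  torsion_free X K -> is_hom f -> forall g, Tor_omega X G g -> f g = 1.
Proof.
  intros K_tf f_hom g [n Hn]. revert g Hn. induction n as [|n IHn]; intros g Hg.
  - simpl in Hg. subst g. apply (hom_one f_hom).
  - refine (normal_closure_min (hom_kernel_normal f_hom) _ g Hg).
    intros x [m [Xm Hx]]. apply K_tf. exists m. split; [exact Xm |].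
    rewrite <- (hom_pow f_hom). apply IHn, Hx.
Qed.

End IteratedTorsion.

Theorem corollary2p4 (G : group) (X : nat -> Prop) :
  exists (Q : group) (h : G -> Q),
    is_hom h /\
    (forall q : Q, exists g : G, h g = q) /\
    (forall g : G, h g = gone <-> Tor_omega X G g) /\
    torsion_free X Q /\
    (forall (K : group) (f : G -> K), torsion_free X K -> is_hom f ->
       exists phi : Q -> K, is_hom phi /\ forall g : G, f g = phi (h g)).
Proof.
  pose proof (Tor_omega_normal G X) as HN.
  exists (quotient HN), (proj (Tor_omega X G)).
  repeat split.
  - apply proj_hom.
  - apply proj_surj.
  - apply (proj_kernel HN).
  - apply (proj_kernel HN).
  - apply (quotient_torsion_free HN X). intros g m Xm. apply Tor_omega_root, Xm.
  - intros K f K_tf f_hom. apply (quotient_lift HN K f f_hom).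
    apply hom_Tor_omega_trivial; assumption.
Qed.
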